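(* If a shift space $X\subseteq\mathscr{A}^\infty$ has the $\bar d$-shadowing property and $\sigma(X)=X$, then $X$ is chain mixing.
   Context: Shift spaces are nonempty closed shift-invariant subsets of $\mathscr{A}^\infty=\mathscr{A}^{\mathbb N_0}$ ($\mathscr{A}$ finite, $\sigma$ the left shift); $\mathcal L(X)$, $\mathcal L_n(X)$ denote the words (of length $n$) appearing in $X$. $\bar d(x,y)=\limsup_{n\to\infty}\frac1n|\{0\le j<n:x_j\ne y_j\}|$. $X$ has the $\bar d$-shadowing property if for every $\varepsilon>0$ there is $N$ such that for every sequence $(w^{(j)})_{j\ge1}$ in $\mathcal L(X)$ with $|w^{(j)}|\ge N$ there is $x'\in X$ with $\bar d(w^{(1)}w^{(2)}\cdots,x')<\varepsilon$. The $n$-th Markov approximation $X^M_n$ is the set of $x\in\mathscr{A}^\infty$ all of whose subwords of length $n+1$ are in $\mathcal L_{n+1}(X)$. $X$ is chain mixing if $X^M_n$ is topologically mixing for all but finitely many $n$ (topologically mixing: for all $u,w\in\mathcal L$ there is $N$ such that for each $n\ge N$ some $v$ with $|v|=n$ has $uvw\in\mathcal L$). *)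

From HB Require Import structures.
From mathcomp Require Import all_boot all_order all_algebra.
From mathcomp Require Import all_classical all_reals all_analysis.
Set Implicit Arguments. Unset Strict Implicit. Unset Printing Implicit Defensive.
Import Order.TTheory GRing.Theory Num.Theory.
Local Open Scope ring_scope.

Section Shifts.
Variable A : finType.

Definition seqA := nat -> A.

Definition shiftA (x : seqA) : seqA := fun n => x n.+1.

Definition subword (x : seqA) (i m : nat) : seq A := mkseq (fun k => x (i + k)) m.

(* closed in the product topology of the discrete topology on A:
   every point of the closure of X lies in X *)
Definition closed_seqs (X : seqA -> Prop) : Prop :=
  forall x : seqA,
    (forall n, exists y, X y /\ forall i, (i < n)%N -> y i = x i) -> X x.

Definition shift_space (X : seqA -> Prop) : Prop :=
  (exists x, X x) /\ closed_seqs X /\ (forall x, X x -> X (shiftA x)).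

Definition lang (X : seqA -> Prop) (w : seq A) : Prop :=
  exists x, X x /\ exists i, w = subword x i (size w).

Definition markov_approx (X : seqA -> Prop) (n : nat) : seqA -> Prop :=
  fun x => forall i, lang X (subword x i n.+1).

Definition top_mixing (Y : seqA -> Prop) : Prop :=
  forall u w, lang Y u -> lang Y w ->
    exists N, forall n, (N <= n)%N ->
      exists v : seq A, size v = n /\ lang Y (u ++ v ++ w).

Definition chain_mixing (X : seqA -> Prop) : Prop :=
  exists n0, forall n, (n0 <= n)%N -> top_mixing (markov_approx X n).

Definition dbar (R : realType) (x y : seqA) : \bar R :=
  limn_esup (fun n : nat =>
    ((#|[set j : 'I_n | x j != y j]|)%:R / n%:R : R)%:E).

(* z is the infinite concatenation w 0 ++ w 1 ++ w 2 ++ ... *)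
Definition is_concat (w : nat -> seq A) (z : seqA) : Prop :=
  forall j i (a : A), (i < size (w j))%N ->
    z ((\sum_(k < j) size (w k)) + i)%N = nth a (w j) i.

Definition dbar_shadowing (R : realType) (X : seqA -> Prop) : Prop :=
  forall eps : R, 0 < eps ->
    exists N : nat, (0 < N)%N /\
      forall (w : nat -> seq A),
        (forall j, lang X (w j) /\ (N <= size (w j))%N) ->
        forall z, is_concat w z ->
          exists x', X x' /\ (dbar R z x' < eps%:E)%E.

End Shifts.

From mathcomp Require Import all_boot all_order all_algebra.
From mathcomp Require Import all_classical all_reals all_analysis.
From mathcomp Require Import zify ring.
Set Implicit Arguments. Unset Strict Implicit. Unset Printing Implicit Defensive.
Import Order.TTheory GRing.Theory Num.Theory.

(* For n >= 1 the Markov approximation X^M_n is the set of walks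
   in the Rauzy graph of order n of X: its vertices are the n-words of X and
   its edges the (n+1)-words.  Such a subshift is topologically mixing as soon
   as this graph is strongly connected and aperiodic (it has closed walks of
   two consecutive lengths at some vertex), and both properties follow from
   d-bar shadowing combined with sigma(X) = X:
   - concatenating long blocks taken from points of X gives a sequence that is
     d-bar close to some x' in X; since a mismatch in every n-window of a
     block costs density 1/n, x' must reproduce a whole n-window of the
     concatenation in some block of every arithmetic progression of blocks;
   - alternating blocks starting with a and blocks ending with b (the latter
     exist because every point has preimages) then yields a walk from a to b;
   - if all closed walks had lengths divisible by some g > 1, repeating one
     block of length 1 mod g would yield, in the same way, a closed walk whose
     length is not divisible by g. *)

Section Words.
Variable A : finType.
Implicit Types (x y z : seqA A).

Definition shift_by x k : seqA A := fun t => x (k + t).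

Definition glue y1 y2 o : seqA A :=
  fun t => if t < o then y1 t else y2 (t - o).

Definition blocks M (F : nat -> seqA A) : seqA A := fun t => F (t %/ M) (t %% M).

Lemma size_subword x i m : size (subword x i m) = m.
Proof. exact: size_mkseq. Qed.

Lemma subword_ext x y i j m :
  (forall t, t < m -> x (i + t) = y (j + t)) -> subword x i m = subword y j m.
Proof.
by move=> H; apply/eq_in_map => t; rewrite mem_iota add0n => /H.
Qed.

Lemma subword_eq_at x y i j m :
  subword x i m = subword y j m -> forall t, t < m -> x (i + t) = y (j + t).
Proof.
move=> H t tm; have := congr1 (fun s => nth (x 0) s t) H.
by rewrite /= !nth_mkseq.
Qed.

Lemma subword_shift_by x k i m : subword (shift_by x k) i m = subword x (k + i) m.
Proof. by apply: subword_ext => t _; rewrite /shift_by addnA. Qed.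

Lemma subword_cat x i a b :
  subword x i (a + b) = subword x i a ++ subword x (i + a) b.
Proof.
rewrite /subword /mkseq iotaD map_cat; congr (_ ++ _).
rewrite add0n -[a]addn0 iotaDl -map_comp addn0.
by apply: eq_map => t /=; congr x; exact: addnA.
Qed.

Lemma subword_glue_l y1 y2 o n i l :
  subword y1 o n = subword y2 0 n -> i + l <= o + n ->
  subword (glue y1 y2 o) i l = subword y1 i l.
Proof.
move=> E il; apply: subword_ext => t tl; rewrite /glue.
case: ltnP => // ot; have tn : i + t - o < n.
  by rewrite ltn_subLR //; apply: leq_trans il; rewrite ltn_add2l.
by have := subword_eq_at E tn; rewrite add0n subnKC.
Qed.

Lemma subword_glue_r y1 y2 o i l :
  o <= i -> subword (glue y1 y2 o) i l = subword y2 (i - o) l.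
Proof.
move=> oi; apply: subword_ext => t _.
by rewrite /glue ltnNge (leq_trans oi (leq_addr _ _)) /= addnBAC.
Qed.

Lemma blocks_concat M F :
  0 < M -> is_concat (fun k => mkseq (F k) M) (blocks M F).
Proof.
move=> M0 j i a; rewrite size_mkseq => iM.
rewrite (eq_bigr (fun _ => M)) => [|k _]; last by rewrite size_mkseq.
rewrite sum_nat_const card_ord /blocks divnMDl // divn_small // addn0.
by rewrite modnMDl modn_small // nth_mkseq.
Qed.

Lemma subword_blocks M F k r l :
  0 < M -> r + l <= M -> subword (blocks M F) (k * M + r) l = subword (F k) r l.
Proof.
move=> M0 rl; apply: subword_ext => t tl.
have lt : r + t < M by apply: leq_trans rl; rewrite ltn_add2l.
by rewrite /blocks -addnA divnMDl // divn_small // addn0 modnMDl modn_small.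
Qed.

Definition mismatch z x : pred nat := fun j => z j != x j.

Lemma card_mismatch z x T :
  #|[set j : 'I_T | z j != x j]| = count (mismatch z x) (iota 0 T).
Proof.
by rewrite cardsE -sum1_card -(big_mkord (mismatch z x) (fun _ => 1))
  /index_iota subn0 sum1_count.
Qed.

Lemma count_iota_mono (P : pred nat) a l l' :
  l <= l' -> count P (iota a l) <= count P (iota a l').
Proof.
by move=> ll'; rewrite -(subnKC ll') iotaD count_cat leq_addr.
Qed.

Lemma count_windows (P : pred nat) a n c :
  (forall w, w < c -> has P (iota (a + w * n) n)) -> c <= count P (iota a (c * n)).
Proof.
elim: c => [//|c IH] H; rewrite mulSnr iotaD count_cat -addn1 leq_add //.
  by apply: IH => w wc; apply: H; rewrite ltnS ltnW.
by rewrite -has_count; apply: H.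
Qed.

Lemma mismatch_window z x i n :
  subword z i n != subword x i n -> has (mismatch z x) (iota i n).
Proof.
apply: contraR => /hasPn same; apply/eqP/subword_ext => t tn.
by apply/eqP; rewrite -[_ == _]negbK; apply: same; rewrite mem_iota leq_addr ltn_add2l.
Qed.

Lemma count_block z x n M k :
  (forall r, r + n <= M -> subword z (k * M + r) n != subword x (k * M + r) n) ->
  M %/ n <= count (mismatch z x) (iota (k * M) M).
Proof.
move=> dead; apply: leq_trans (count_iota_mono _ _ (leq_divM M n)).
apply: count_windows => w wc; apply: mismatch_window; apply: dead.
by apply: leq_trans (leq_divM M n); rewrite -mulSnr leq_mul2r wc orbT.
Qed.

Lemma count_progression (P : pred nat) M c k0 p J : 0 < p ->
  (forall j, c <= count P (iota ((k0 + p * j) * M) M)) ->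
  J * c <= count P (iota 0 ((k0 + p * J) * M)).
Proof.
move=> p0 H; elim: J => [//|J IH].
have -> : (k0 + p * J.+1) * M = (k0 + p * J) * M + p * M by ring.
rewrite iotaD count_cat add0n mulSn addnC leq_add //.
by apply: leq_trans (H J) (count_iota_mono _ _ _); rewrite leq_pmull.
Qed.

End Words.

Lemma limn_esup_ge (R : realType) (u : (\bar R)^nat) (e : \bar R) :
  (forall N, exists2 T, N <= T & (e <= u T)%E) -> (e <= limn_esup u)%E.
Proof.
move=> H; rewrite limn_esup_lim.
have -> : limn (esups u) = ereal_inf (range (esups u)).
  by apply: cvg_lim => //; exact: cvg_esups_inf.
apply: le_ereal_inf_tmp => _ [N _ <-]; have [T NT eT] := H N.
by apply: le_trans eT _; apply: ereal_sup_ubound; exists T.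
Qed.

(* The arithmetic behind the density bound: J blocks of the progression, each
   contributing M %/ n mismatches, before position (k0 + p J) M. *)
Lemma progression_density n M p k0 J : 0 < n -> n <= M -> k0 < J ->
  (k0 + p * J) * M <= J * (M %/ n) * (2 * n * p.+1).
Proof.
move=> n0 nM kJ; have c0 : 0 < M %/ n by rewrite divn_gt0.
have M2 : M <= 2 * (M %/ n) * n by have := ltn_ceil M n0; nia.
have kp : k0 + p * J <= p.+1 * J by rewrite mulSn leq_add2r ltnW.
by apply: leq_trans (leq_mul kp M2) _; nia.
Qed.

Section Density.
Variables (R : realType) (A : finType).
Implicit Types (x z : seqA A).

Lemma dbar_progression_bound z x n M p k0 :
  0 < n -> n <= M -> 0 < p ->
  (forall j r, r + n <= M ->
     subword z ((k0 + p * j) * M + r) n != subword x ((k0 + p * j) * M + r) n) ->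
  ((((2 * n * p.+1)%:R : R)^-1)%:E <= dbar R z x)%E.
Proof.
move=> n0 nM p0 dead; apply: limn_esup_ge => N; set J := (N + k0).+1.
have M0 : 0 < M by apply: leq_trans nM.
exists ((k0 + p * J) * M); first by rewrite /J; nia.
have T0 : 0 < (k0 + p * J) * M by rewrite /J; nia.
have D0 : 0 < 2 * n * p.+1 by rewrite !muln_gt0 n0.
rewrite lee_fin card_mismatch ler_pdivlMr ?ltr0n // mulrC ler_pdivrMr ?ltr0n //.
rewrite -natrM ler_nat; apply: leq_trans (progression_density p n0 nM _) _.
  by rewrite /J ltnS leq_addl.
rewrite leq_mul2r; apply/orP; right.
by apply: count_progression p0 _ => j; apply: count_block; apply: dead.
Qed.

Lemma window_in_progression z x n M p :
  0 < n -> n <= M -> 0 < p ->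
  (dbar R z x < (((2 * n * p.+1)%:R : R)^-1)%:E)%E ->
  forall k0, exists j r, r + n <= M /\
    subword z ((k0 + p * j) * M + r) n = subword x ((k0 + p * j) * M + r) n.
Proof.
move=> n0 nM p0 close k0; apply: contrapT => none.
have := dbar_progression_bound n0 nM p0 (k0:=k0) (z:=z) (x:=x).
have dead : forall j r, r + n <= M -> subword z ((k0 + p * j) * M + r) n
    != subword x ((k0 + p * j) * M + r) n.
  by move=> j r rM; apply/eqP => E; apply: none; exists j, r.
by move=> /(_ dead) /(lt_le_trans close); rewrite ltxx.
Qed.

End Density.

(* An additive submonoid of nat containing a positive element either contains
   two consecutive integers or has all its elements divisible by some g > 1
   (namely the least positive difference of two of its elements). *)
Lemma submonoid_consecutive_or_period (S : nat -> Prop) :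
  S 0 -> (forall a b, S a -> S b -> S (a + b)) -> forall s, 0 < s -> S s ->
  (exists t, S t /\ S t.+1) \/ (exists2 g, 1 < g & forall m, S m -> g %| m).
Proof.
move=> S0 SD s s0 Ss.
pose diff d := `[< 0 < d /\ exists t, S t /\ S (t + d) >].
have exdiff : exists d, diff d by exists s; apply/asboolP; split; last by exists 0.
case: (ex_minnP exdiff) => g /asboolP [g0 [t [St Stg]]] gmin.
have SM c a : S a -> S (c * a) by elim: c => [|c IH] Sa; rewrite ?mulSn; auto.
case: (ltnP 1 g) => g1; last first.
  by left; exists t; have -> : t.+1 = t + g by lia.
right; exists g => // m Sm; set q := m %/ g; set r := m %% g.
have E : m + q * t = q * (t + g) + r by rewrite {1}(divn_eq m g); ring.
apply/dvdnP; exists q; apply/eqP; rewrite {1}(divn_eq m g) -/r -/q.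
rewrite -{2}[q * g]addn0 eqn_add2l; apply/negPn/negP; rewrite -lt0n => r0.
suff : g <= r by rewrite leqNgt ltn_pmod.
apply: gmin; apply/asboolP; split => //; exists (q * (t + g)); split.
  exact: SM.
by rewrite -E; apply: SD => //; exact: SM.
Qed.

Section RauzyGraph.
Variables (A : finType) (X : seqA A -> Prop).
Implicit Types (x y : seqA A) (p q : seq A).

Definition vertex n p := lang X p /\ size p = n.

(* y is admissible for m steps when its first m windows of length n + 1 are
   words of X, i.e. edges of the Rauzy graph. *)
Definition admissible n m y := forall t, t < m -> lang X (subword y t n.+1).

Definition walk n m p q :=
  exists y, admissible n m y /\ subword y 0 n = p /\ subword y m n = q.

Lemma lang_subword x i m : X x -> lang X (subword x i m).
Proof. by move=> Xx; exists x; split => //; exists i; rewrite size_subword. Qed.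

Lemma vertex_subword n x i : X x -> vertex n (subword x i n).
Proof. by move=> Xx; split; [exact: lang_subword | exact: size_subword]. Qed.

Lemma vertex_of_edge n y i : lang X (subword y i n.+1) -> vertex n (subword y i n).
Proof.
move=> [x [Xx [j E]]]; rewrite size_subword in E.
have -> : subword y i n = subword x j n.
  by apply: subword_ext => t tn; apply: (subword_eq_at E); rewrite ltnS ltnW.
exact: vertex_subword.
Qed.

Lemma walk_subword n x i j :
  X x -> i <= j -> walk n (j - i) (subword x i n) (subword x j n).
Proof.
move=> Xx ij; exists (shift_by x i); split.
  by move=> t _; rewrite subword_shift_by; exact: lang_subword.
by rewrite !subword_shift_by addn0 subnKC.
Qed.

(* Walks compose: glue the two sequences along the common vertex. *)
Lemma walk_cat n m k p q r : walk n m p q -> walk n k q r -> walk n (m + k) p r.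
Proof.
move=> [y1 [adm1 [p1 q1]]] [y2 [adm2 [q2 r2]]].
have E : subword y1 m n = subword y2 0 n by rewrite q1 q2.
exists (glue y1 y2 m); split; last split.
- move=> t tmk; case: (ltnP t m) => tm.
    by rewrite (subword_glue_l E) ?addnS ?ltn_add2r //; exact: adm1.
  by rewrite subword_glue_r //; apply: adm2; rewrite ltn_subLR // addnC.
- by rewrite (subword_glue_l E) // add0n leq_addl.
- by rewrite subword_glue_r ?leq_addr // addKn.
Qed.

Lemma walk_nil n m p q : walk n m p q -> walk n 0 p p.
Proof. by move=> [y [_ [py _]]]; exists y; split => // t. Qed.

Lemma walk_iter n m p : walk n m p p -> forall c, walk n (c * m) p p.
Proof.
move=> W; elim=> [|c IH]; first exact: walk_nil W.
by rewrite mulSn; exact: walk_cat W IH.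
Qed.

(* Closed walks of lengths s and s + 1 give closed walks of every length
   >= s * s, since such a length is a combination of s and s + 1. *)
Lemma walk_all_large n s p :
  walk n s p p -> walk n s.+1 p p -> forall m, s * s <= m -> walk n m p p.
Proof.
case: s => [|s] Ws Ws1 m sm; first by rewrite -(muln1 m); apply: walk_iter.
set q := m %/ s.+1; set r := m %% s.+1.
have rq : r <= q by rewrite leq_divRL // (leq_trans _ sm) // leq_mul2r ltnW ?ltn_mod.
have -> : m = (q - r) * s.+1 + r * s.+2.
  by rewrite {1}(divn_eq m s.+1) -/q -/r; move: rq; clear; nia.
by apply: walk_cat; apply: walk_iter.
Qed.

Lemma closed_walks_dvd n g b :
  (forall p q, vertex n p -> vertex n q -> exists m, walk n m p q) ->
  vertex n b -> (forall m, walk n m b b -> g %| m) ->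
  forall p m, vertex n p -> walk n m p p -> g %| m.
Proof.
move=> conn vb Hb p m vp Wp.
have [k Wk] := conn p b vp vb; have [l Wl] := conn b p vb vp.
have loop_lk := Hb _ (walk_cat Wl Wk).
by have := Hb _ (walk_cat Wl (walk_cat Wp Wk)); rewrite addnCA dvdn_addl.
Qed.

End RauzyGraph.

Section Shadowing.
Variables (R : realType) (A : finType) (X : seqA A -> Prop).
Hypothesis onto : forall y, X y -> exists x, X x /\ shiftA x = y.
Hypothesis shadowing : dbar_shadowing R X.

(* Since sigma(X) = X, every point of X has an L-th preimage in X. *)
Lemma preimage_shift L x : X x -> exists x', X x' /\ forall t, x' (L + t) = x t.
Proof.
elim: L x => [|L IH] x Xx; first by exists x.
have [x1 [X1 E1]] := IH x Xx; have [x' [X' E']] := onto X1.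
by exists x'; split => // t; rewrite -E1 -E' /shiftA addSn.
Qed.

Lemma shadow_blocks n p : 0 < n -> 0 < p ->
  exists N, forall M (F : nat -> seqA A), N <= M ->
    (forall k, lang X (mkseq (F k) M)) ->
    exists x', X x' /\ forall k0, exists j r, r + n <= M /\
      subword (F (k0 + p * j)) r n = subword x' ((k0 + p * j) * M + r) n.
Proof.
move=> n0 p0.
have eps0 : (0 < ((2 * n * p.+1)%N%:R : R)^-1)%R.
  by rewrite invr_gt0 ltr0n !muln_gt0 n0.
have [N [_ HN]] := shadowing eps0.
exists (N + n) => M F NM HF.
have nM : n <= M by apply: leq_trans NM; exact: leq_addl.
have M0 : 0 < M by apply: leq_trans nM.
have long k : lang X (mkseq (F k) M) /\ N <= size (mkseq (F k) M).
  by rewrite size_mkseq (leq_trans (leq_addr n N)).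
have [x' [Xx' close]] := HN _ long _ (blocks_concat (F:=F) M0).
exists x'; split => // k0.
have [j [r [rM E]]] := window_in_progression n0 nM p0 close k0.
by exists j, r; rewrite -(subword_blocks F _ M0).
Qed.

(* The Rauzy graph of order n is strongly connected: alternate blocks starting
   with a (even blocks) and blocks ending with b (odd blocks); the shadowing
   point walks from a window of an even block to one of a later odd block. *)
Lemma rauzy_strongly_connected n : 0 < n ->
  forall a b, vertex X n a -> vertex X n b -> exists2 m, 0 < m & walk X n m a b.
Proof.
move=> n0 a b [[xa [Xa [ia Ea]]] sa] [[xb [Xb [ib Eb]]] sb].
rewrite sa in Ea; rewrite sb in Eb; rewrite Ea Eb.
have [N HN] := shadow_blocks n0 (isT : 0 < 2).
have [xb' [Xb' xbE]] := preimage_shift N Xb.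
pose F k := if odd k then shift_by xb' (ib + n) else shift_by xa ia.
have HF k : lang X (mkseq (F k) N).
  by rewrite /F; case: odd; [exact: (lang_subword (ib + n) N Xb') | exact: lang_subword].
have [x' [Xx' surv]] := HN N F (leqnn N) HF.
have [j1 [r1 [r1N S1]]] := surv 0.
have [j2 [r2 [r2N S2]]] := surv (2 * j1).+1.
rewrite add0n /F oddM /= subword_shift_by in S1.
rewrite /F oddD oddS !oddM /= subword_shift_by in S2.
have lt12 : 2 * j1 * N + r1 < ((2 * j1).+1 + 2 * j2) * N + r2 by nia.
have W1 := walk_subword n Xa (leq_addr r1 ia).
have W2 := walk_subword n Xx' (ltnW lt12); rewrite -S1 -S2 in W2.
have W3 : walk X n (ib + N - (ib + n + r2)) (subword xb' (ib + n + r2) n) (subword xb ib n).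
  have -> : subword xb ib n = subword xb' (ib + N) n.
    by apply: subword_ext => t _; rewrite -xbE addnCA addnA.
  by apply: walk_subword => //; rewrite -addnA leq_add2l addnC.
by eexists; last exact: walk_cat (walk_cat W1 W2) W3; lia.
Qed.

(* The Rauzy graph of order n has no period g > 1: repeat one block of length
   M = 1 mod g; the shadowing point links a window of block k1 to a window of
   block k1 + 1 + g j, which yields a closed walk whose length differs from
   the multiple (1 + g j) M of M by the length of a walk inside one block;
   comparing with walks inside that block, g would divide M. *)
Lemma rauzy_no_period n g : 0 < n -> 1 < g -> forall b, vertex X n b ->
  ~ (forall p m, vertex X n p -> walk X n m p p -> g %| m).
Proof.
move=> n0 g1 b [[xb [Xb [ib _]]] _] period.
have [N HN] := shadow_blocks n0 (ltnW g1).
set M := N * g + 1.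
have NM : N <= M by rewrite /M; nia.
have [x' [Xx' surv]] := HN M (fun=> shift_by xb ib) NM (fun=> lang_subword ib M Xb).
have [j1 [r1 [r1M S1]]] := surv 0.
have [j2 [r [rM S2]]] := surv (g * j1).+1.
rewrite /= subword_shift_by in S1; rewrite /= subword_shift_by in S2.
set D := M + g * (j2 * M).
have lt : (0 + g * j1) * M + r1 <= ((g * j1).+1 + g * j2) * M + r by nia.
have lenW : ((g * j1).+1 + g * j2) * M + r - ((0 + g * j1) * M + r1) = D + r - r1.
  by rewrite /D; nia.
have W := walk_subword n Xx' lt; rewrite -S1 -S2 lenW in W.
have vp : vertex X n (subword xb (ib + r1) n) by exact: vertex_subword.
have gD : g %| D.
  case: (leqP r1 r) => rr.
    have [k _ Wqp] := rauzy_strongly_connected n0 (vertex_subword n (ib + r) Xb) vp.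
    have Wpq := walk_subword n Xb (leq_add (leqnn ib) rr); rewrite subnDl in Wpq.
    have := period _ _ vp (walk_cat W Wqp).
    by rewrite -addnBA // -addnA dvdn_addl // (period _ _ vp (walk_cat Wpq Wqp)).
  have Wqp := walk_subword n Xb (leq_add (leqnn ib) (ltnW rr)); rewrite subnDl in Wqp.
  have := period _ _ vp (walk_cat W Wqp).
  by rewrite (_ : D + r - r1 + (r1 - r) = D) // /D; lia.
move: gD; rewrite /D dvdn_addl ?dvdn_mulr // /M dvdn_addr ?dvdn_mull // dvdn1.
by rewrite gtn_eqF.
Qed.

Lemma rauzy_aperiodic n : 0 < n -> forall b, vertex X n b ->
  exists t, walk X n t b b /\ walk X n t.+1 b b.
Proof.
move=> n0 b vb; have [m m0 Wm] := rauzy_strongly_connected n0 vb vb.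
have [//|[g g1 Hg]] := submonoid_consecutive_or_period (walk_nil Wm)
  (fun a c Wa Wc => walk_cat Wa Wc) m0 Wm.
exfalso; apply: (rauzy_no_period n0 g1 vb).
apply: closed_walks_dvd vb Hg => p q vp vq.
by have [m' _ W] := rauzy_strongly_connected n0 vp vq; exists m'.
Qed.

Lemma rauzy_mixing n : 0 < n -> forall a b, vertex X n a -> vertex X n b ->
  exists M0, forall m, M0 <= m -> walk X n m a b.
Proof.
move=> n0 a b va vb.
have [k _ Wk] := rauzy_strongly_connected n0 va vb.
have [t [Wt Wt1]] := rauzy_aperiodic n0 vb.
exists (k + t * t) => m km; have km' : k <= m by apply: leq_trans km; exact: leq_addr.
rewrite -(subnKC km'); apply: walk_cat Wk (walk_all_large Wt Wt1 _).
by rewrite leq_subRL.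
Qed.

(* The Markov approximation of order n >= 1 is topologically mixing: a long
   walk between the last n-window of u and the first n-window of w is glued
   between the points realising u and w in X^M_n. *)
Lemma markov_approx_mixing n : 0 < n -> top_mixing (markov_approx X n).
Proof.
move=> n0 u w [y [Yy [i Eu]]] [y2 [Yy2 [j Ew]]].
set o := i + size u.
have [M0 HM0] := rauzy_mixing n0 (vertex_of_edge (Yy o)) (vertex_of_edge (Yy2 j)).
exists M0 => m mM0; have [P [admP [Pa Pb]]] := HM0 m mM0.
have E1 : subword y o n = subword P 0 n by rewrite Pa.
set Z1 := glue y P o.
have E2 : subword Z1 (o + m) n = subword (shift_by y2 j) 0 n.
  by rewrite /Z1 subword_glue_r ?leq_addr // addKn Pb subword_shift_by addn0.
set Z := glue Z1 (shift_by y2 j) (o + m).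
exists (subword Z o m); split; first exact: size_subword.
exists Z; split.
  move=> t; case: (ltnP t (o + m)) => tom; last first.
    by rewrite subword_glue_r // subword_shift_by; exact: Yy2.
  rewrite (subword_glue_l E2) ?addnS ?ltn_add2r //.
  case: (ltnP t o) => to; last by rewrite subword_glue_r //; apply: admP; rewrite ltn_subLR.
  by rewrite (subword_glue_l E1) ?addnS ?ltn_add2r //; exact: Yy.
exists i; rewrite !size_cat size_subword !subword_cat; congr (_ ++ (_ ++ _)).
- rewrite (subword_glue_l E2); last by rewrite /o -addnA leq_addr.
  by rewrite (subword_glue_l E1) // /o leq_addr.
- by rewrite -/o /Z subword_glue_r // subnn subword_shift_by addn0.
Qed.

End Shadowing.

Theorem mainTheorem6 (R : realType) (A : finType) (X : seqA A -> Prop) :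
  shift_space X ->
  dbar_shadowing R X ->
  (forall y, X y <-> exists x, X x /\ shiftA x = y) ->
  chain_mixing X.
Proof.
move=> _ shadowing onto; exists 1 => n n1.
by apply: (markov_approx_mixing (R:=R)) => // y /onto.
Qed.
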